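(* Let $M$ be a matroid and let $B_1,\dots,B_s$ be a partial shelling of $\mathcal{I}(M)$ such that the set $\{B_1,\dots,B_s\}$ is an order ideal of $\mathrm{Int}_<(M)$ for some total order $<$ on the ground set of $M$. Then the partial shelling is extendable, i.e. there is an ordering $B'_1,\dots,B'_t$ of the remaining bases of $M$ such that $B_1,\dots,B_s,B'_1,\dots,B'_t$ is a shelling order of $\mathcal{I}(M)$.
   Context: For a matroid $M$ on finite set $E$, $\mathcal{I}(M)$ is its independence complex, whose facets are the bases. A shelling order of a pure simplicial complex is a total order $F_1<\dots<F_k$ of its facets such that for each $j\ge2$, $\langle F_1,\dots,F_{j-1}\rangle\cap\langle F_j\rangle$ is pure of dimension one less than the complex ($\langle\mathcal{G}\rangle$ the complex generated by $\mathcal{G}$). A partial shelling is a sequence of bases $B_1,\dots,B_s$ that is a shelling order of the complex $\langle B_1,\dots,B_s\rangle$. For a total order $<$ on $E$ and a basis $B$, the internally passive set $IP_<(B)$ is the set of $b\in B$ for which there is $b'\notin B$ with $b'<b$ and $(B\setminus\{b\})\cup\{b'\}$ a basis. $\mathrm{Int}_<(M)$ is the poset on the bases of $M$ with $B\preceq B'$ iff $IP_<(B)\subseteq IP_<(B')$. An order ideal of a poset is a downward-closed subset. *)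

From mathcomp Require Import all_boot.
Set Implicit Arguments. Unset Strict Implicit. Unset Printing Implicit Defensive.

(* A matroid on the finite ground set T is given by its family of bases,
   satisfying the basis axioms: nonempty, and the basis exchange property. *)
Definition matroid_bases (T : finType) (bs : {set {set T}}) : Prop :=
  bs != set0 /\
  forall B1 B2, B1 \in bs -> B2 \in bs ->
    forall x, x \in B1 :\: B2 ->
      exists2 y, y \in B2 :\: B1 & y |: (B1 :\ x) \in bs.

Definition strict_total_order (T : finType) (lt : rel T) : Prop :=
  [/\ irreflexive lt, transitive lt &
      forall x y, x != y -> lt x y || lt y x].

(* pure complex: all maximal faces have exactly k elements
   (i.e. pure of dimension k-1) *)
Definition pure_of_size (T : finType) (K : {set T} -> bool) (k : nat) : Prop :=
  forall G, K G -> #|G| <= k /\ exists H, [/\ K H, G \subset H & #|H| = k].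

Definition gen_complex (T : finType) (s : seq {set T}) (G : {set T}) : bool :=
  has (fun F : {set T} => G \subset F) s.

Definition facet_size (T : finType) (s : seq {set T}) : nat :=
  \max_(F <- s) #|F|.

(* s (a duplicate-free list of facets) is a shelling order of <s>:
   for each j >= 2, <F_1..F_{j-1}> ∩ <F_j> is pure of dimension dim - 1 *)
Definition shelling_order (T : finType) (s : seq {set T}) : Prop :=
  uniq s /\
  forall j, 0 < j < size s ->
    pure_of_size
      (fun G => (G \subset nth set0 s j) && gen_complex (take j s) G)
      (facet_size s).-1.

Definition partial_shelling (T : finType) (bs : {set {set T}}) (s : seq {set T})
  : Prop := all (fun B => B \in bs) s /\ shelling_order s.

Definition IP (T : finType) (lt : rel T) (bs : {set {set T}}) (B : {set T})
  : {set T} :=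
  [set b in B | [exists b', [&& b' \notin B, lt b' b & b' |: (B :\ b) \in bs]]].

Definition int_order_ideal (T : finType) (lt : rel T) (bs : {set {set T}})
  (S : pred {set T}) : Prop :=
  (forall B, S B -> B \in bs) /\
  forall B B', S B -> B' \in bs -> IP lt bs B' \subset IP lt bs B -> S B'.

From mathcomp Require Import all_boot.
Set Implicit Arguments. Unset Strict Implicit. Unset Printing Implicit Defensive.

(* Append the remaining bases in order of increasing number of internally
   passive elements.  This respects Int_<(M): if B <> B' are bases with
   IP(B) \subset B', then IP(B) is a proper subset of IP(B') (a consequence of
   the orthogonality of fundamental circuits and cocircuits).  For a newly
   added basis B, the faces it shares with earlier facets are exactly the
   faces missing some b in IP(B):
   - a face containing IP(B) lies in no earlier facet F, since IP(B) would be
     a proper subset of IP(F), contradicting either the order-ideal property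
     (F in the partial shelling) or the ordering (F appended before B);
   - exchanging b in IP(B) for the least element of its fundamental cocircuit
     gives a basis containing B \ b with a strictly smaller IP, hence an
     earlier facet.
   So <earlier facets> /\ <B> is generated by the codimension-one faces
   B \ b, b in IP(B). *)

Definition basis_exchange (T : finType) (bs : {set {set T}}) :=
  forall B1 B2, B1 \in bs -> B2 \in bs ->
    forall x, x \in B1 :\: B2 -> exists2 y, y \in B2 :\: B1 & y |: (B1 :\ x) \in bs.

Ltac rewrite_hyps :=
  repeat match goal with
  | H : is_true (?a != ?b) |- context [?a == ?b] => rewrite (negbTE H)
  | H : is_true (?a != ?b) |- context [?b == ?a] => rewrite (eq_sym b a) (negbTE H)
  | H : is_true (~~ ?P) |- context [?P] => rewrite (negbTE H)
  | H : is_true ?P |- context [?P] => rewrite H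
  | |- context [?a == ?a] => rewrite eqxx
  end.

Ltac bool_by_cases w :=
  rewrite !inE;
  repeat (match goal with |- context [w == ?a] => case: (w =P a) => [->|/eqP ?] end;
          rewrite_hyps);
  rewrite_hyps;
  repeat match goal with |- context [w \in ?X] => case: (w \in X) end;
  rewrite /= ?andbF ?andbT ?orbF ?orbT //.

Ltac bool_by_hyps := rewrite !inE; rewrite_hyps; rewrite /= ?andbF ?andbT ?orbF ?orbT //.

(* Proves an identity or inclusion between finset expressions built from
   points and sets, by case analysis on an arbitrary element, using the
   membership and (in)equality hypotheses in context. *)
Ltac finset_by_cases :=
  let w := fresh "w" in
  first [apply/setP => w | apply/subsetP => w]; bool_by_cases w.

Lemma card_setD_exchange (T : finType) (B1 B2 : {set T}) (a b : T) :
  a \in B1 :\: B2 -> b \in B2 -> #|(b |: (B1 :\ a)) :\: B2| < #|B1 :\: B2|.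
Proof.
move=> a_diff bB2; have ab : a != b by apply: contraTneq a_diff => ->; rewrite inE bB2.
apply: proper_card; apply/properP; split; first by finset_by_cases.
by exists a => //; move: a_diff; bool_by_cases a.
Qed.

Lemma facet_size_const (T : finType) (l : seq {set T}) r :
  l != [::] -> (forall F, F \in l -> #|F| = r) -> facet_size l = r.
Proof.
case: l => // F l _ l_r; rewrite /facet_size big_cons l_r ?mem_head //.
by apply/maxn_idPl/bigmax_leqP_seq => F' F'l _; rewrite l_r // in_cons F'l orbT.
Qed.

Lemma pure_restriction (T : finType) (P : seq {set T}) (B R : {set T}) :
  R \subset B -> (forall F, F \in P -> ~~ (R \subset F)) ->
  (forall b, b \in R -> gen_complex P (B :\ b)) ->
  pure_of_size (fun G => (G \subset B) && gen_complex P G) #|B|.-1.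
Proof.
move=> RB R_notin R_drop G /andP[GB /hasP[F FP GF]].
have [b bR bF] := subsetPn (R_notin F FP).
have GBb : G \subset B :\ b.
  apply/subsetP => w wG; rewrite !inE (subsetP GB) // andbT.
  by apply: contraNneq bF => <-; apply: (subsetP GF).
have card_Bb : #|B :\ b| = #|B|.-1 by rewrite (cardsD1 b B) (subsetP RB).
split; first by rewrite -card_Bb subset_leq_card.
by exists (B :\ b); rewrite subD1set R_drop.
Qed.

Section SortedByKey.

Variables (A : eqType) (key : A -> nat) (x0 : A) (t : seq A).
Hypothesis t_sorted : sorted (relpre key leq) t.

Let key_nth_mono i j : i <= j -> j < size t -> key (nth x0 t i) <= key (nth x0 t j).
Proof.
move=> le_ij lt_j.
apply: (sorted_leq_nth (relpre_trans leq_trans) (fun=> leqnn _) x0 t_sorted) => //.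
by rewrite inE (leq_ltn_trans le_ij lt_j).
Qed.

Lemma key_take_le i F : i < size t -> F \in take i t -> key F <= key (nth x0 t i).
Proof.
move=> lt_i F_take.
have lt_k : index F (take i t) < i by rewrite -[i in _ < i](size_takel (ltnW lt_i)) index_mem.
by rewrite -(nth_index x0 F_take) nth_take // key_nth_mono // ltnW.
Qed.

Lemma key_lt_mem_take i F : F \in t -> key F < key (nth x0 t i) -> F \in take i t.
Proof.
move=> Ft; rewrite in_take //; apply: contraTT; rewrite -!leqNgt => le_i.
by rewrite -(nth_index x0 Ft) key_nth_mono // index_mem.
Qed.

End SortedByKey.

Section Matroid.

Variables (T : finType) (bs : {set {set T}}).

Hypothesis bs_exchange : basis_exchange bs.

Lemma bases_sub_eq B1 B2 : B1 \in bs -> B2 \in bs -> B1 \subset B2 -> B1 = B2.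
Proof.
move=> B1_bs B2_bs sub12; apply/eqP; rewrite eqEsubset sub12 /=.
apply/subsetP => x xB2; apply/negPn/negP => xB1.
have x_diff : x \in B2 :\: B1 by rewrite inE xB1.
have [y] := bs_exchange B2_bs B1_bs x_diff.
by rewrite inE => /andP[/negP yB2 /(subsetP sub12)].
Qed.

Lemma card_bases B1 B2 : B1 \in bs -> B2 \in bs -> #|B1| = #|B2|.
Proof.
move=> + B2_bs; have [n] := ubnP #|B1 :\: B2|; elim: n B1 => // n IH B1 lt_n B1_bs.
case: (set_0Vmem (B1 :\: B2)) => [/eqP | [a a_diff]].
  by rewrite setD_eq0 => /(bases_sub_eq B1_bs B2_bs) ->.
have [b b_diff B3_bs] := bs_exchange B1_bs B2_bs a_diff.
move: (a_diff) (b_diff); rewrite !inE => /andP[aB2 aB1] /andP[bB1 bB2].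
rewrite -(IH _ _ B3_bs); last by rewrite -ltnS (leq_trans _ lt_n) // ltnS card_setD_exchange.
by rewrite cardsU1 (cardsD1 a B1) aB1 !inE (negbTE bB1) andbF.
Qed.

Lemma facet_size_bases l B : {subset l <= bs} -> B \in l -> facet_size l = #|B|.
Proof.
move=> l_bs Bl; apply: facet_size_const; first by apply: contraTneq Bl => ->.
by move=> F Fl; apply: card_bases; apply: l_bs.
Qed.

Lemma exchange_mem_notin_bases B x u : B \in bs -> x \in B -> u \in B ->
  u != x -> u |: (B :\ x) \notin bs.
Proof.
move=> B_bs xB uB ux; apply/negP => /(card_bases B_bs).
by rewrite (setUidPr _) ?sub1set ?inE ?ux // (cardsD1 x B) xB add1n => /esym; apply: n_Sn.
Qed.

Lemma exchange_two B1 B2 x a b : B1 \in bs -> B2 \in bs -> x \in B1 :\: B2 ->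
  B2 :\: B1 \subset [set a; b] -> (a |: (B1 :\ x) \in bs) || (b |: (B1 :\ x) \in bs).
Proof.
move=> B1_bs B2_bs x_diff sub; have [y /(subsetP sub)] := bs_exchange B1_bs B2_bs x_diff.
by rewrite !inE => /orP[] /eqP-> ->; rewrite ?orbT.
Qed.

Lemma dual_exchange B1 B2 x : B1 \in bs -> B2 \in bs -> x \in B1 :\: B2 ->
  exists2 y, y \in B2 :\: B1 & x |: (B2 :\ y) \in bs.
Proof.
move=> + B2_bs; have [n] := ubnP #|B1 :\: B2|; elim: n B1 => // n IH B1 lt_n B1_bs x_diff.
have /andP[xB2 xB1] : (x \notin B2) && (x \in B1) by rewrite -in_setD.
case: (set_0Vmem ((B1 :\: B2) :\ x)) => [diff_x | [a]].
  have [y y_diff B3_bs] := bs_exchange B1_bs B2_bs x_diff.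
  move: (y_diff); rewrite inE => /andP[yB1 yB2].
  have yx : y != x by apply: contraNneq yB1 => ->.
  have B3_sub : y |: (B1 :\ x) \subset B2.
    apply/subsetP => w; rewrite !inE => /orP[/eqP-> // | /andP[wx wB1]].
    by apply: contraT => wB2; rewrite -(in_set0 w) -diff_x !inE wx wB2.
  exists y => //; rewrite -(bases_sub_eq B3_bs B2_bs B3_sub).
  by have -> : x |: ((y |: (B1 :\ x)) :\ y) = B1 by finset_by_cases.
rewrite !inE => /and3P[ax aB2 aB1].
have a_diff : a \in B1 :\: B2 by rewrite inE aB2.
have [b b_diff B3_bs] := bs_exchange B1_bs B2_bs a_diff.
move: (b_diff); rewrite inE => /andP[bB1 bB2].
have [||y y_diff] := IH _ _ B3_bs.
- by rewrite -ltnS (leq_trans _ lt_n) // ltnS card_setD_exchange.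
- by rewrite !inE xB2 xB1 (eq_sym x a) ax orbT.
exists y => //; move: y_diff; rewrite !inE => /andP[/norP[_ y_notin] yB2].
rewrite yB2 andbT; apply: contra y_notin => yB1; rewrite yB1 andbT.
by apply: contraTneq yB2 => ->.
Qed.

(* For a basis A and y \notin A, circuit_of A y is the fundamental circuit of
   y; for a basis B and x \in B, cocircuit_of B x is the fundamental cocircuit
   of x. *)
Definition circuit_of (A : {set T}) y := y |: [set e in A | y |: (A :\ e) \in bs].

Definition cocircuit_of (B : {set T}) x := [set u | u |: (B :\ x) \in bs].

Lemma cocircuit_of_meets_basis B x u : B \in bs -> x \in B ->
  u \in cocircuit_of B x -> u \in B -> u = x.
Proof.
move=> B_bs xB; rewrite inE => u_cocirc uB; apply/eqP; apply: contraTT u_cocirc.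
exact: exchange_mem_notin_bases.
Qed.

Lemma cocircuit_of_exchange_sub B x e f : B \in bs -> x \in B ->
  e \notin cocircuit_of B x -> cocircuit_of (e |: (B :\ f)) x \subset cocircuit_of B x.
Proof.
move=> B_bs xB e_cocirc; apply/subsetP => u; rewrite inE => D_bs.
have [->|ux] := eqVneq u x; first by rewrite inE setD1K.
set D := u |: ((e |: (B :\ f)) :\ x) in D_bs.
have x_diff : x \in B :\: D by rewrite /D; bool_by_hyps.
have D_sub : D :\: B \subset [set u; e] by rewrite /D; finset_by_cases.
case/orP: (exchange_two B_bs D_bs x_diff D_sub) => [|eB]; first by rewrite inE.
by rewrite inE eB in e_cocirc.
Qed.

Lemma circuit_of_exchange_sub A y e f : A \in bs -> y \notin A -> e \in A -> f \notin A ->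
  f != y -> e \notin circuit_of A y -> circuit_of (f |: (A :\ e)) y \subset circuit_of A y.
Proof.
move=> A_bs yA eA fA fy e_circ.
have ey : e != y by apply: contraTneq eA => ->.
have eyA : y |: (A :\ e) \notin bs by apply: contra e_circ => eyA; rewrite !inE eA eyA orbT.
apply/subsetP => u; rewrite !inE.
have [->|uy /=] := eqVneq u y; first by [].
case/andP=> /orP[/eqP-> | /andP[ue uA]].
  have -> : y |: ((f |: (A :\ e)) :\ f) = y |: (A :\ e) by finset_by_cases.
  by rewrite (negbTE eyA).
move=> D_bs; have uf : u != f by apply: contraTneq uA => ->.
set D := y |: ((f |: (A :\ e)) :\ u) in D_bs.
have f_diff : f \in D :\: A by rewrite /D; bool_by_hyps.
have A_sub : A :\: D \subset [set e; u] by rewrite /D; finset_by_cases.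
case/orP: (exchange_two D_bs A_bs f_diff A_sub).
  have -> : e |: (D :\ f) = y |: (A :\ u) by rewrite /D; finset_by_cases.
  by move=> ->; rewrite uA.
have -> : u |: (D :\ f) = y |: (A :\ e) by rewrite /D; finset_by_cases.
by rewrite (negbTE eyA).
Qed.

Lemma circuit_of_exchange A y e f : A \in bs -> f |: (A :\ e) \in bs -> y \notin A ->
  e \in A -> f \notin A -> f != y -> e \notin circuit_of A y ->
  circuit_of (f |: (A :\ e)) y = circuit_of A y.
Proof.
move=> A_bs A'_bs yA eA fA fy e_circ.
have ey : e != y by apply: contraTneq eA => ->.
have fe : f != e by apply: contraTneq eA => <-.
apply/eqP; rewrite eqEsubset circuit_of_exchange_sub //=.
have -> : circuit_of A y = circuit_of (e |: ((f |: (A :\ e)) :\ f)) y.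
  by congr circuit_of; finset_by_cases.
apply: circuit_of_exchange_sub => //; try by bool_by_hyps.
rewrite !inE (negbTE fy) /=.
have -> : y |: ((f |: (A :\ e)) :\ f) = y |: (A :\ e) by finset_by_cases.
by apply: contra e_circ => /andP[_ eyA]; rewrite !inE eA eyA orbT.
Qed.

Lemma circuit_cocircuit_orthogonal A B x y : A \in bs -> B \in bs -> y \notin A ->
  x \in A -> x \in B -> x \in circuit_of A y ->
  exists2 u, u \in circuit_of A y :&: cocircuit_of B x & u != x.
Proof.
have [n] := ubnP #|A :\: B|; elim: n A B => // n IH A B lt_n A_bs B_bs yA xA xB x_circ.
have yx : y != x by apply: contraNneq yA => ->.
case: (set_0Vmem (A :\: B)) => [/eqP | [e e_diff]].
  rewrite setD_eq0 => /(bases_sub_eq A_bs B_bs) AB; exists y => //.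
  by rewrite -AB !inE eqxx /=; move: x_circ; bool_by_hyps.
move: (e_diff); rewrite inE => /andP[eB eA].
have ex : e != x by apply: contraNneq eB => ->.
have [e_cocirc | e_cocirc] := boolP (e \in cocircuit_of B x); last first.
  have [f f_diff B'_bs] := dual_exchange A_bs B_bs e_diff.
  move: f_diff; rewrite inE => /andP[fA fB].
  have [||u] := IH A (e |: (B :\ f)) _ A_bs B'_bs yA xA _ x_circ.
  - have -> : A :\: (e |: (B :\ f)) = (A :\: B) :\ e by finset_by_cases.
    by rewrite -ltnS (leq_trans _ lt_n) // ltnS (cardsD1 e (A :\: B)) e_diff.
  - have xf : x != f by apply: contraTneq xA => ->.
    by bool_by_hyps.
  rewrite inE => /andP[u_circ u_cocirc] ux; exists u => //.
  by rewrite inE u_circ (subsetP (cocircuit_of_exchange_sub f B_bs xB e_cocirc)).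
have [e_circ | e_circ] := boolP (e \in circuit_of A y).
  by exists e => //; rewrite inE e_circ e_cocirc.
have [f f_diff A'_bs] := bs_exchange A_bs B_bs e_diff.
move: f_diff; rewrite inE => /andP[fA fB].
have fy : f != y by apply: contra e_circ => /eqP fy; rewrite !inE eA -fy A'_bs orbT.
rewrite -(circuit_of_exchange A_bs A'_bs) // in x_circ *.
apply: IH => //; try by bool_by_hyps.
by rewrite -ltnS (leq_trans _ lt_n) // ltnS card_setD_exchange.
Qed.

Lemma cocircuit_of_swap B b z e f : B \in bs -> b \in B -> z \notin B -> e \in B -> e != b ->
  f \in cocircuit_of (z |: (B :\ b)) e -> f != z ->
  f \in cocircuit_of B e \/ f \in cocircuit_of B b /\ z \in cocircuit_of B e.
Proof.
move=> B_bs bB zB eB eb + fz; rewrite !inE => D_bs.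
have [->|fe] := eqVneq f e; first by left; rewrite setD1K.
have ze : z != e by apply: contraNneq zB => ->.
set D := f |: ((z |: (B :\ b)) :\ e) in D_bs.
have z_diff : z \in D :\: B by rewrite /D; bool_by_hyps.
have B_sub : B :\: D \subset [set b; e] by rewrite /D; finset_by_cases.
case/orP: (exchange_two D_bs B_bs z_diff B_sub) => [|fbB].
  have -> : b |: (D :\ z) = f |: (B :\ e) by rewrite /D; finset_by_cases.
  by left.
have eD : e |: (D :\ z) = f |: (B :\ b) by rewrite /D; finset_by_cases.
rewrite eD in fbB.
have e_diff : e \in B :\: D by rewrite /D; bool_by_hyps.
have D_sub : D :\: B \subset [set f; z] by rewrite /D; finset_by_cases.
by case/orP: (exchange_two B_bs D_bs e_diff D_sub) => ?; [left | right].
Qed.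

Section InternalActivity.

Variable lt : rel T.
Hypothesis lt_order : strict_total_order lt.

Let lt_irr : irreflexive lt. Proof. by case: lt_order. Qed.
Let lt_trans : transitive lt. Proof. by case: lt_order. Qed.
Let lt_total x y : x != y -> lt x y || lt y x. Proof. by case: lt_order => _ _; apply. Qed.

Lemma exists_lt_min (S : {set T}) z0 : z0 \in S ->
  exists2 z, z \in S & forall y, y \in S -> y != z -> lt z y.
Proof.
move=> z0S; have [z zS z_min] := arg_minnP (fun z => #|[set y in S | lt y z]|) z0S.
exists z => // y yS yz; case/orP: (lt_total yz) => // lt_yz.
have := z_min y yS; rewrite leqNgt => /negP; case; apply: proper_card.
apply/properP; split; last by exists y; rewrite !inE ?yS ?lt_yz ?lt_irr.
by apply/subsetP => w; rewrite !inE => /andP[-> lt_wy]; exact: lt_trans lt_yz.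
Qed.

Local Notation IPB := (IP lt bs).

Lemma IP_sub B : IPB B \subset B.
Proof. by apply/subsetP => b; rewrite inE => /andP[]. Qed.

Lemma IPP B b : B \in bs ->
  reflect (b \in B /\ exists2 u, u \in cocircuit_of B b & lt u b) (b \in IPB B).
Proof.
move=> B_bs; rewrite inE; apply: (iffP andP).
  by case=> bB /existsP[u /and3P[_ ub u_bs]]; split => //; exists u; rewrite ?inE.
case=> bB [u u_cocirc ub]; split => //; apply/existsP; exists u.
move: (u_cocirc); rewrite inE => ->; rewrite ub !andbT.
apply: contraL ub => uB; rewrite (cocircuit_of_meets_basis B_bs bB u_cocirc uB).
by rewrite lt_irr.
Qed.

Lemma IP_exchange_min_sub B b z : B \in bs -> b \in B -> z \notin B ->
  z \in cocircuit_of B b -> (forall u, u \in cocircuit_of B b -> u != z -> lt z u) ->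
  IPB (z |: (B :\ b)) \subset IPB B.
Proof.
move=> B_bs bB zB z_cocirc z_min; have B'_bs : z |: (B :\ b) \in bs by rewrite inE in z_cocirc.
apply/subsetP => e /(IPP _ B'_bs)[eB' [f f_cocirc fe]].
have fz : f != z.
  apply: contraTneq fe => fz.
  have -> : f = e by apply: (cocircuit_of_meets_basis B'_bs eB' f_cocirc); rewrite fz setU11.
  by rewrite lt_irr.
have [ez | ez] := eqVneq e z.
  rewrite ez in f_cocirc fe; have : f \in cocircuit_of B b.
    by move: f_cocirc; rewrite !inE (_ : f |: _ = f |: (B :\ b)) //; finset_by_cases.
  by move/z_min/(_ fz)/lt_trans/(_ fe); rewrite lt_irr.
have /andP[eb eB] : (e != b) && (e \in B) by move: eB'; rewrite !inE (negbTE ez).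
apply/(IPP _ B_bs); split => //.
case: (cocircuit_of_swap B_bs bB zB eB eb f_cocirc fz) => [f_cocircB | [/z_min/(_ fz) zf ze]].
  by exists f.
by exists z => //; exact: lt_trans zf fe.
Qed.

Lemma IP_exchange_min B b : B \in bs -> b \in IPB B ->
  exists2 z, z |: (B :\ b) \in bs & IPB (z |: (B :\ b)) \proper IPB B.
Proof.
move=> B_bs b_IP; have [bB [u u_cocirc ub]] := IPP _ B_bs b_IP.
have [z z_cocirc z_min] := exists_lt_min u_cocirc.
have zb : z != b.
  apply: contraTneq ub => zb; have [->|ub'] := eqVneq u z; first by rewrite zb lt_irr.
  by apply/negP => /(lt_trans (z_min _ u_cocirc ub')); rewrite zb lt_irr.
have zB : z \notin B by apply: contra zb => /(cocircuit_of_meets_basis B_bs bB z_cocirc) ->.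
exists z; first by rewrite inE in z_cocirc.
apply/properP; split; first exact: IP_exchange_min_sub.
by exists b => //; apply: contraNN zb => /(subsetP (IP_sub _)); rewrite !inE eqxx /= orbF eq_sym.
Qed.

Lemma IP_sub_IP B B' : B \in bs -> B' \in bs -> IPB B \subset B' -> IPB B \subset IPB B'.
Proof.
move=> B_bs B'_bs IP_B'; apply/subsetP => x x_IP; have xB' := subsetP IP_B' x x_IP.
have [xB [y y_cocirc yx]] := IPP _ B_bs x_IP.
have yB : y \notin B.
  apply: contraL yx => /(cocircuit_of_meets_basis B_bs xB y_cocirc) ->.
  by rewrite lt_irr.
have x_circ : x \in circuit_of B y by move: y_cocirc; rewrite !inE xB => ->; rewrite orbT.
have [u /setIP[u_circ u_cocirc] ux] :=
  circuit_cocircuit_orthogonal B_bs B'_bs yB xB xB' x_circ.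
apply/(IPP _ B'_bs); split => //; exists u => //.
move: u_circ; rewrite !inE => /orP[/eqP-> // | /andP[uB y_bs]].
have uB' : u \notin B'.
  by apply: contra ux => uB'; rewrite (cocircuit_of_meets_basis B'_bs xB' u_cocirc uB').
have uy : u != y by apply: contraNneq yB => <-.
have /negPf yu : ~~ lt y u.
  apply: contra uB' => yu; apply: (subsetP IP_B'); apply/(IPP _ B_bs).
  by split => //; exists y; rewrite ?inE.
by move: (lt_total uy); rewrite yu orbF => /lt_trans; apply.
Qed.

Lemma IP_proper B B' : B \in bs -> B' \in bs -> B != B' -> IPB B \subset B' ->
  IPB B \proper IPB B'.
Proof.
move=> B_bs B'_bs BB' IP_B'; apply/properP; split; first exact: IP_sub_IP.
have [z0 z0_diff] : exists z0, z0 \in (B :\: B') :|: (B' :\: B).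
  case: (set_0Vmem ((B :\: B') :|: (B' :\: B))) => [|[z0]]; last by exists z0.
  move/eqP; rewrite setU_eq0 !setD_eq0 => /andP[BB'_sub _].
  by rewrite (bases_sub_eq B_bs B'_bs BB'_sub) eqxx in BB'.
have [z z_diff z_min] := exists_lt_min z0_diff.
case/setUP: (z_diff) => [zBB' | zB'B].
  have [y /setDP[yB' yB] y_bs] := dual_exchange B_bs B'_bs zBB'.
  have yz : y != z by apply: contraTneq zBB' => <-; rewrite inE yB'.
  have zy : lt z y by apply: z_min yz; rewrite !inE yB' yB orbT.
  exists y; last by apply: contra yB => /(subsetP (IP_sub _)).
  by apply/(IPP _ B'_bs); split => //; exists z; rewrite ?inE.
have [y /setDP[yB yB'] y_bs] := dual_exchange B'_bs B_bs zB'B.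
have yz : y != z by apply: contraTneq zB'B => <-; rewrite inE yB.
have zy : lt z y by apply: z_min yz; rewrite !inE yB' yB.
suff /(subsetP IP_B') : y \in IPB B by rewrite (negbTE yB').
by apply/(IPP _ B_bs); split => //; exists z; rewrite ?inE.
Qed.

Section ShellingExtension.

Variable s : seq {set T}.

Hypothesis s_bases : {subset s <= bs}.
Hypothesis s_ideal : forall B B', B \in s -> B' \in bs ->
  IPB B' \subset IPB B -> B' \in s.

Local Notation IP_size B := #|IPB B|.

Definition shelling_tail := sort (relpre (fun B => IP_size B) leq) [seq B <- enum bs | B \notin s].

Local Notation t := shelling_tail.

Lemma mem_shelling_tail B : (B \in t) = (B \in bs) && (B \notin s).
Proof. by rewrite mem_sort mem_filter mem_enum andbC. Qed.

Lemma shelling_tail_uniq : uniq t.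
Proof. by rewrite sort_uniq filter_uniq // enum_uniq. Qed.

Lemma shelling_tail_sorted : sorted (relpre (fun B => IP_size B) leq) t.
Proof. by apply: sort_sorted => B B'; apply: leq_total. Qed.

Lemma perm_shelling_tail : uniq s -> perm_eq (s ++ t) (enum bs).
Proof.
move=> s_uniq; apply: uniq_perm; rewrite ?enum_uniq //.
  rewrite cat_uniq s_uniq shelling_tail_uniq andbT.
  by apply/hasPn => B; rewrite mem_shelling_tail => /andP[].
move=> B; rewrite mem_cat mem_shelling_tail mem_enum.
by case: (boolP (B \in s)) => [/s_bases -> | _]; rewrite ?andbT.
Qed.

Lemma IP_not_sub_prefix i F : i < size t -> F \in s ++ take i t ->
  ~~ (IPB (nth set0 t i) \subset F).
Proof.
move=> lt_i; set B := nth set0 t i.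
have /andP[B_bs Bs] : (B \in bs) && (B \notin s) by rewrite -mem_shelling_tail mem_nth.
rewrite mem_cat => /orP[Fs | F_take]; apply/negP => IP_F.
  have BF : B != F by apply: contraNneq Bs => ->.
  have IP_prop := IP_proper B_bs (s_bases Fs) BF IP_F.
  by rewrite (s_ideal Fs B_bs (proper_sub IP_prop)) in Bs.
have BF : B != F.
  apply: contraTneq F_take => <-.
  by rewrite in_take ?mem_nth // index_uniq ?ltnn // shelling_tail_uniq.
have F_bs : F \in bs by move: (mem_take F_take); rewrite mem_shelling_tail => /andP[].
have IP_prop := IP_proper B_bs F_bs BF IP_F.
by move: (key_take_le set0 shelling_tail_sorted lt_i F_take); rewrite leqNgt /= proper_card.
Qed.

Lemma IP_drop_prefix i b : i < size t -> b \in IPB (nth set0 t i) ->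
  gen_complex (s ++ take i t) (nth set0 t i :\ b).
Proof.
move=> lt_i; set B := nth set0 t i => b_IP.
have B_bs : B \in bs by move: (mem_nth set0 lt_i); rewrite mem_shelling_tail => /andP[].
have [z B'_bs IP_prop] := IP_exchange_min B_bs b_IP.
apply/hasP; exists (z |: (B :\ b)); last exact: subsetUr.
rewrite mem_cat; case: (boolP (z |: (B :\ b) \in s)) => //= B's.
apply: (key_lt_mem_take (x0 := set0) shelling_tail_sorted); last exact: proper_card.
by rewrite mem_shelling_tail B'_bs B's.
Qed.

End ShellingExtension.

End InternalActivity.

End Matroid.

Theorem corollary5p3 (T : finType) (bs : {set {set T}}) (lt : rel T)
  (s : seq {set T}) :
  matroid_bases bs ->
  strict_total_order lt ->
  partial_shelling bs s ->
  int_order_ideal lt bs (fun B => B \in s) ->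
  exists t : seq {set T},
    perm_eq (s ++ t) (enum bs) /\ shelling_order (s ++ t).
Proof.
move=> [_ bs_exchange] lt_order [/allP s_bs [s_uniq s_shell]] [_ s_ideal].
have st_perm := perm_shelling_tail lt s_bs s_uniq; set t := shelling_tail bs lt s in st_perm *.
have st_bs : {subset s ++ t <= bs} by move=> B; rewrite (perm_mem st_perm) mem_enum.
exists t; split => //; split; first by rewrite (perm_uniq st_perm) enum_uniq.
move=> j /andP[j_gt0 j_lt]; rewrite (facet_size_bases bs_exchange st_bs (mem_nth set0 j_lt)).
case: (ltnP j (size s)) => [j_lt_s | j_ge_s].
  rewrite nth_cat take_cat j_lt_s -(facet_size_bases bs_exchange s_bs (mem_nth set0 j_lt_s)).
  by apply: s_shell; rewrite j_gt0.
have lt_i : j - size s < size t by rewrite ltn_subLR // -size_cat.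
rewrite nth_cat take_cat ltnNge j_ge_s /=.
apply: (@pure_restriction _ _ _ (IP lt bs _)) => [|F|b]; first exact: IP_sub.
  exact: (IP_not_sub_prefix bs_exchange lt_order s_bs s_ideal lt_i).
exact: (IP_drop_prefix bs_exchange lt_order lt_i).
Qed.
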